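(* Let $n\ge4$, let $0<\alpha_2,\alpha_3<1$, $\alpha_1=1-\alpha_2-\alpha_3$, and $\lambda^*=\big(\frac{n-1+\alpha_1}{n},\frac{\alpha_2}{n},\frac{\alpha_3}{n}\big)$. Let $i=(i_1,i_2,i_3)\in I$ with $i_2\ge1$, $i_3\ge1$, $i_2+i_3\ge3$. Then (a) if $i_2\ge1$ and $i_3\ge2$, $$|l_i(\lambda^* )|\le\frac{1-\alpha_3}{e(\ln n-\ln2)}\cdot\frac{\Gamma(n+1)}{i_1!\,\Gamma(n-i_1)}\cdot\frac{\nu_2(i_2)}{i_2^{1+\alpha_2}\,i_3(i_3-1)};$$ (b) if $i_2\ge2$ and $i_3\ge1$, $$|l_i(\lambda^* )|\le\frac{1-\alpha_2}{e(\ln n-\ln2)}\cdot\frac{\Gamma(n+1)}{i_1!\,\Gamma(n-i_1)}\cdot\frac{\nu_3(i_3)}{i_3^{1+\alpha_3}\,i_2(i_2-1)}.$$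
   Context: For an integer $n\ge1$ let $I=\{i=(i_1,i_2,i_3)\in\mathbb{Z}_+^3: i_1+i_2+i_3=n\}$ and $l_i(\lambda)=\prod_{s=1}^{3}\frac{1}{i_s!}\prod_{t=0}^{i_s-1}(n\lambda_s-t)$ for $\lambda=(\lambda_1,\lambda_2,\lambda_3)$ (Lagrange fundamental polynomials for the equally spaced nodes $i/n$ of a triangle in barycentric coordinates). For $p=2,3$ and positive integers $s$: $\nu_p(1)=\alpha_p$ and $\nu_p(s)=\alpha_p(1-\alpha_p)2^{\alpha_p}$ for $s\ge2$. *)

From Stdlib Require Import Reals Lra Lia Arith Factorial.
Open Scope R_scope.

Fixpoint fallprod (y : R) (k : nat) : R :=
  match k with
  | O => 1
  | S k' => fallprod y k' * (y - INR k')
  end.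

(* one factor of the Lagrange fundamental polynomial:
   (1/k!) prod_{t=0}^{k-1} (n*x - t) *)
Definition lag_factor (n : nat) (x : R) (k : nat) : R :=
  / INR (fact k) * fallprod (INR n * x) k.

Definition lagr (n i1 i2 i3 : nat) (l1 l2 l3 : R) : R :=
  lag_factor n l1 i1 * lag_factor n l2 i2 * lag_factor n l3 i3.

Definition nu (alpha : R) (s : nat) : R :=
  if Nat.eqb s 1 then alpha else alpha * (1 - alpha) * Rpower 2 alpha.

From Stdlib Require Import Reals Factorial Lra Lia.
Open Scope R_scope.

(* For [0 < s < 1] the [k]-th Lagrange factor at [lambda = s/n] is
   [|s (s-1) ... (s-k+1)| / k! = (s/k) prod_{1 <= u < k} (1 - s/u)], and with
   [s = a2 + a3], [m = i2 + i3 = n - i1] the first factor at [lambda1 = (n - s)/n] is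
   [n!/(i1! m!) prod_{m < u <= n} (1 - s/u)].  As [1 - x <= exp (-x)] and
   [ln (u+1) - ln u <= 1/u], a product [prod_{a <= u < b} (1 - s/u)] is at most [(a/b)^s].
   For the [i2]-factor this gives [nu a2 i2 / i2^(1+a2)] directly.  In the other two factors
   (keeping only the exponent [a3] in the first one) the powers telescope to
   [(2/(n+1))^a3 <= exp (- a3 (ln n - ln 2))], and [a exp (-a L) <= 1/(e L)] removes [a3].
   Part (b) is part (a) with the second and third coordinates exchanged. *)

Lemma exp_le x y : x <= y -> exp x <= exp y.
Proof. intros [Hlt | ->]; [left; exact (exp_increasing _ _ Hlt) | right; reflexivity]. Qed.

Lemma ln_le x y : 0 < x -> x <= y -> ln x <= ln y.
Proof. intros Hx [Hlt | ->]; [left; exact (ln_increasing _ _ Hx Hlt) | right; reflexivity]. Qed.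

Lemma ln_succ_sub_le_inv t : 0 < t -> ln (t + 1) - ln t <= / t.
Proof.
  intros Ht.
  assert (Hinv : 0 < / t) by (apply Rinv_0_lt_compat; lra).
  replace (t + 1) with (t * (1 + / t)) by (field; lra).
  rewrite ln_mult by lra.
  assert (Hlog : ln (1 + / t) <= ln (exp (/ t))) by (apply ln_le; [lra | apply exp_ineq1_le]).
  rewrite ln_exp in Hlog. lra.
Qed.

Lemma div_le_exp_neg_ln x y c : 0 < x <= y -> 0 <= c <= 1 ->
  x / y <= exp (- c * (ln y - ln x)).
Proof.
  intros Hxy Hc.
  assert (Hln : ln x <= ln y) by (apply ln_le; lra).
  replace (x / y) with (exp (ln x - ln y)).
  - apply exp_le. nra.
  - unfold Rminus, Rdiv.
    rewrite exp_plus, <- ln_Rinv, !exp_ln by (try apply Rinv_0_lt_compat; lra).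
    reflexivity.
Qed.

Lemma mul_exp_neg_le a L : 0 < L -> 0 <= a -> a * exp (- a * L) <= / (exp 1 * L).
Proof.
  intros HL Ha.
  pose proof (exp_ineq1_le (a * L - 1)) as Hlin.
  pose proof (exp_pos 1). pose proof (exp_pos (- a * L)).
  assert (Hsplit : exp (a * L - 1) * (exp 1 * exp (- a * L)) = 1).
  { rewrite <- !exp_plus, <- exp_0. f_equal. ring. }
  apply (Rmult_le_reg_r (exp 1 * L)); [apply Rmult_lt_0_compat; lra |].
  rewrite Rinv_l by (apply Rgt_not_eq, Rmult_lt_0_compat; lra).
  apply Rle_trans with (exp (a * L - 1) * (exp 1 * exp (- a * L))); [| lra].
  replace (a * exp (- a * L) * (exp 1 * L)) with (a * L * (exp 1 * exp (- a * L))) by ring.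
  apply Rmult_le_compat_r; [apply Rmult_le_pos |]; lra.
Qed.

Fixpoint decay_prod (s : R) (a k : nat) : R :=
  match k with
  | O => 1
  | S k' => decay_prod s a k' * (1 - s / INR (a + k'))
  end.

Lemma decay_prod_succ_l s a k : decay_prod s a (S k) = (1 - s / INR a) * decay_prod s (S a) k.
Proof.
  induction k as [|k IH]; cbn [decay_prod].
  - rewrite Nat.add_0_r. ring.
  - cbn [decay_prod] in IH. rewrite IH, Nat.add_succ_r, Nat.add_succ_l. ring.
Qed.

Lemma decay_prod_bounds s a k : (1 <= a)%nat -> 0 <= s <= INR a ->
  0 <= decay_prod s a k <= exp (- s * (ln (INR (a + k)) - ln (INR a))).
Proof.
  intros Ha Hs. induction k as [|k [IH0 IH1]]; cbn [decay_prod].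
  - rewrite Nat.add_0_r, Rminus_diag, Rmult_0_r, exp_0. lra.
  - set (t := INR (a + k)) in *.
    assert (Ht : INR a <= t) by (apply le_INR; lia).
    assert (Ha1 : 1 <= INR a) by (apply (le_INR 1); lia).
    assert (Hfac0 : 0 <= 1 - s / t).
    { assert (s / t <= 1) by (apply Rmult_le_reg_r with t; [lra | field_simplify; lra]).
      lra. }
    assert (Hfac1 : 1 - s / t <= exp (- s * / t)).
    { pose proof (exp_ineq1_le (- s * / t)). unfold Rdiv in *. lra. }
    replace (INR (a + S k)) with (t + 1) by (unfold t; rewrite Nat.add_succ_r, S_INR; reflexivity).
    pose proof (ln_succ_sub_le_inv t ltac:(lra)) as Hstep.
    split; [apply Rmult_le_pos; lra |].
    apply Rle_trans with (exp (- s * (ln t - ln (INR a))) * exp (- s * / t)).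
    + apply Rmult_le_compat; lra.
    + rewrite <- exp_plus. apply exp_le.
      assert (s * (ln (t + 1) - ln t) <= s * / t) by (apply Rmult_le_compat_l; lra).
      lra.
Qed.

Lemma INR_fact_pos k : 0 < INR (fact k).
Proof. apply lt_0_INR, lt_O_fact. Qed.

Lemma fallprod_succ_l y k : fallprod y (S k) = y * fallprod (y - 1) k.
Proof.
  induction k as [|k IH]; cbn [fallprod] in *.
  - simpl. ring.
  - rewrite IH, S_INR. ring.
Qed.

Lemma Rabs_fallprod_small s k : 0 < s < 1 ->
  Rabs (fallprod s (S k)) = s * INR (fact k) * decay_prod s 1 k.
Proof.
  intros Hs. induction k as [|k IH].
  - cbn. rewrite Rabs_right; lra.
  - change (fallprod s (S (S k))) with (fallprod s (S k) * (s - INR (S k))).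
    assert (1 <= INR (S k)) by (apply (le_INR 1); lia).
    rewrite Rabs_mult, IH. rewrite (Rabs_left1 (s - _)) by lra.
    cbn [decay_prod]. change (fact (S k)) with (S k * fact k)%nat.
    rewrite mult_INR. change (1 + k)%nat with (S k). field. lra.
Qed.

Lemma fallprod_nat_sub m k s :
  fallprod (INR (m + k) - s) k = INR (fact (m + k)) / INR (fact m) * decay_prod s (S m) k.
Proof.
  pose proof (INR_fact_pos m).
  induction k as [|k IH]; cbn [decay_prod].
  - cbn [fallprod]. rewrite Nat.add_0_r. field. lra.
  - rewrite fallprod_succ_l.
    replace (INR (m + S k) - s - 1) with (INR (m + k) - s)
      by (rewrite Nat.add_succ_r, S_INR; ring).
    rewrite IH, Nat.add_succ_r, Nat.add_succ_l.
    change (fact (S (m + k))) with (S (m + k) * fact (m + k))%nat.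
    rewrite mult_INR.
    assert (0 < INR (S (m + k))) by (apply lt_0_INR; lia).
    field. lra.
Qed.

Lemma Rabs_lag_factor_small n s k : (0 < n)%nat -> 0 < s < 1 -> (1 <= k)%nat ->
  Rabs (lag_factor n (s / INR n) k) = s / INR k * decay_prod s 1 (k - 1).
Proof.
  intros Hn Hs Hk. destruct k as [|k]; [lia |].
  replace (S k - 1)%nat with k by lia.
  unfold lag_factor.
  assert (0 < INR n) by (apply lt_0_INR; lia).
  replace (INR n * (s / INR n)) with s by (field; lra).
  pose proof (INR_fact_pos (S k)).
  rewrite Rabs_mult, Rabs_fallprod_small, Rabs_right by (try left; try apply Rinv_0_lt_compat; lra).
  change (fact (S k)) with (S k * fact k)%nat.
  rewrite mult_INR. pose proof (INR_fact_pos k).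
  assert (0 < INR (S k)) by (apply lt_0_INR; lia).
  field. lra.
Qed.

Lemma lag_factor_complement m i s : (0 < m + i)%nat ->
  lag_factor (m + i) ((INR (m + i) - s) / INR (m + i)) i
  = INR (fact (m + i)) / (INR (fact i) * INR (fact m)) * decay_prod s (S m) i.
Proof.
  intros Hn. unfold lag_factor.
  assert (0 < INR (m + i)) by (apply lt_0_INR; lia).
  replace (INR (m + i) * ((INR (m + i) - s) / INR (m + i))) with (INR (m + i) - s) by (field; lra).
  rewrite fallprod_nat_sub.
  pose proof (INR_fact_pos i). pose proof (INR_fact_pos m).
  field. lra.
Qed.

Lemma edge_factor_le_nu b j : 0 < b < 1 -> (1 <= j)%nat ->
  b / INR j * decay_prod b 1 (j - 1) <= nu b j / Rpower (INR j) (1 + b).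
Proof.
  intros Hb Hj.
  destruct j as [|[|j]]; [lia | |].
  - cbn. unfold nu, Rpower. cbn. rewrite ln_1, Rmult_0_r, exp_0. lra.
  - replace (S (S j) - 1)%nat with (S j) by lia.
    set (J := INR (S (S j))).
    assert (HJ : 2 <= J) by (apply (le_INR 2); lia).
    destruct (decay_prod_bounds b 2 j ltac:(lia) ltac:(cbn; lra)) as [P0 P1].
    replace (INR (2 + j)) with J in P1 by reflexivity.
    replace (INR 2) with 2 in P1 by (cbn; ring).
    assert (Htail : exp (- b * (ln J - ln 2)) = Rpower 2 b / Rpower J b).
    { unfold Rpower, Rdiv. rewrite <- exp_Ropp, <- exp_plus. f_equal. ring. }
    rewrite decay_prod_succ_l. unfold nu. cbn [Nat.eqb].
    rewrite Rpower_plus, Rpower_1 by lra.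
    replace (INR 1) with 1 by reflexivity.
    assert (0 < Rpower J b) by apply exp_pos.
    apply Rle_trans with (b / J * ((1 - b) * exp (- b * (ln J - ln 2)))).
    + apply Rmult_le_compat_l; [left; apply Rdiv_lt_0_compat; lra |].
      replace (1 - b / 1) with (1 - b) by field. apply Rmult_le_compat_l; lra.
    + rewrite Htail. right. field. lra.
Qed.

(* [(K - 1)/M <= K/(M + 1) <= (K/(M + 1))^c] bridges the gap between the exponents at [K]
   and at [M + 1], after which they telescope to [(2/(N + 1))^c]. *)
Lemma telescoped_bound N M K c : 0 < c < 1 -> 2 <= K -> K + 1 <= M -> M <= N ->
  / M * exp (- c * (ln (N + 1) - ln (M + 1))) * (c / K) * exp (- c * (ln K - ln 2))
  <= / (exp 1 * (ln N - ln 2)) / (K * (K - 1)).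
Proof.
  intros Hc HK HM HN.
  assert (HL : 0 < ln N - ln 2) by (pose proof (ln_increasing 2 N ltac:(lra) ltac:(lra)); lra).
  assert (HKK : 0 < K * (K - 1)) by nra.
  assert (Hratio : (K - 1) / M <= exp (- c * (ln (M + 1) - ln K))).
  { apply Rle_trans with (K / (M + 1)); [| apply div_le_exp_neg_ln; lra].
    apply Rmult_le_reg_r with (M * (M + 1)); [nra |].
    field_simplify; nra. }
  assert (Hln : ln N <= ln (N + 1)) by (apply ln_le; lra).
  assert (Hexp : exp (- c * (ln (M + 1) - ln K)) * exp (- c * (ln (N + 1) - ln (M + 1)))
                   * exp (- c * (ln K - ln 2)) <= exp (- c * (ln N - ln 2))).
  { rewrite <- !exp_plus. apply exp_le. nra. }
  pose proof (exp_pos (- c * (ln (N + 1) - ln (M + 1)))).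
  pose proof (exp_pos (- c * (ln K - ln 2))).
  pose proof (mul_exp_neg_le c (ln N - ln 2) HL ltac:(lra)) as Hkey.
  replace (/ M * exp (- c * (ln (N + 1) - ln (M + 1))) * (c / K) * exp (- c * (ln K - ln 2)))
    with (c / (K * (K - 1)) * ((K - 1) / M * exp (- c * (ln (N + 1) - ln (M + 1)))
                                * exp (- c * (ln K - ln 2)))) by (field; lra).
  apply Rle_trans with (c / (K * (K - 1)) * exp (- c * (ln N - ln 2))).
  - apply Rmult_le_compat_l; [left; apply Rdiv_lt_0_compat; lra |].
    eapply Rle_trans; [| exact Hexp].
    apply Rmult_le_compat_r; [lra |]. apply Rmult_le_compat_r; lra.
  - unfold Rdiv at 2. rewrite (Rmult_comm _ (/ (K * (K - 1)))).
    replace (c / (K * (K - 1)) * exp (- c * (ln N - ln 2)))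
      with (/ (K * (K - 1)) * (c * exp (- c * (ln N - ln 2)))) by (field; lra).
    apply Rmult_le_compat_l; [left; apply Rinv_0_lt_compat |]; lra.
Qed.

Lemma central_factor_le m i k b c : 0 < b < 1 -> 0 < c < 1 -> (2 <= k)%nat -> (k < m)%nat ->
  / INR m * decay_prod (b + c) (S m) i * (c / INR k * decay_prod c 1 (k - 1))
  <= (1 - c) / (exp 1 * (ln (INR (m + i)) - ln 2)) / (INR k * (INR k - 1)).
Proof.
  intros Hb Hc Hk Hkm.
  assert (HK : 2 <= INR k) by (apply (le_INR 2); lia).
  assert (HM : INR k + 1 <= INR m) by (rewrite <- S_INR; apply le_INR; lia).
  assert (HN : INR m <= INR (m + i)) by (apply le_INR; lia).
  destruct (decay_prod_bounds (b + c) (S m) i ltac:(lia) ltac:(rewrite S_INR; lra))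
    as [P0 P1].
  rewrite Nat.add_succ_l, !S_INR in P1.
  assert (Hcentral : decay_prod (b + c) (S m) i
                     <= exp (- c * (ln (INR (m + i) + 1) - ln (INR m + 1)))).
  { eapply Rle_trans; [exact P1 |]. apply exp_le.
    assert (ln (INR m + 1) <= ln (INR (m + i) + 1)) by (apply ln_le; lra). nra. }
  destruct k as [|[|k]]; [lia | lia |].
  replace (S (S k) - 1)%nat with (S k) by lia.
  rewrite decay_prod_succ_l.
  destruct (decay_prod_bounds c 2 k ltac:(lia) ltac:(cbn; lra)) as [Q0 Q1].
  replace (INR (2 + k)) with (INR (S (S k))) in Q1 by reflexivity.
  replace (INR 2) with 2 in Q1 by (cbn; ring).
  replace (INR 1) with 1 by reflexivity.
  pose proof (telescoped_bound (INR (m + i)) (INR m) (INR (S (S k))) c Hc HK HM HN) as T.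
  assert (0 < INR m) by lra.
  apply Rle_trans with ((1 - c) * (/ INR m * exp (- c * (ln (INR (m + i) + 1) - ln (INR m + 1)))
                          * (c / INR (S (S k))) * exp (- c * (ln (INR (S (S k))) - ln 2)))).
  - replace (1 - c / 1) with (1 - c) by field.
    replace (/ INR m * decay_prod (b + c) (S m) i
               * (c / INR (S (S k)) * ((1 - c) * decay_prod c 2 k)))
      with ((1 - c) * (/ INR m * decay_prod (b + c) (S m) i * (c / INR (S (S k)))
                         * decay_prod c 2 k)) by ring.
    apply Rmult_le_compat_l; [lra |].
    assert (0 < c / INR (S (S k))) by (apply Rdiv_lt_0_compat; lra).
    apply Rmult_le_compat; try lra.
    + apply Rmult_le_pos; [apply Rmult_le_pos |]; try lra. left; apply Rinv_0_lt_compat; lra.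
    + apply Rmult_le_compat_r; [lra |].
      apply Rmult_le_compat_l; [left; apply Rinv_0_lt_compat |]; lra.
  - unfold Rdiv in T |- *. rewrite (Rmult_assoc (1 - c) (/ _)).
    apply Rmult_le_compat_l; lra.
Qed.

Lemma fact_ratio_pred n i m : (1 <= m)%nat ->
  INR (fact n) / (INR (fact i) * INR (fact (m - 1)))
  = INR m * (INR (fact n) / (INR (fact i) * INR (fact m))).
Proof.
  intros Hm. destruct m as [|m]; [lia |].
  replace (S m - 1)%nat with m by lia.
  change (fact (S m)) with (S m * fact m)%nat. rewrite mult_INR.
  pose proof (INR_fact_pos i). pose proof (INR_fact_pos m).
  assert (0 < INR (S m)) by (apply lt_0_INR; lia).
  field. lra.
Qed.

Lemma Rabs_lagr_corner_le n i1 j k b c : 0 < b < 1 -> 0 < c < 1 ->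
  (i1 + j + k = n)%nat -> (1 <= j)%nat -> (2 <= k)%nat ->
  Rabs (lag_factor n ((INR n - (b + c)) / INR n) i1 *
        lag_factor n (b / INR n) j * lag_factor n (c / INR n) k)
  <= (1 - c) / (exp 1 * (ln (INR n) - ln 2)) *
     (INR (fact n) / (INR (fact i1) * INR (fact (n - i1 - 1)))) *
     (nu b j / (Rpower (INR j) (1 + b) * (INR k * (INR k - 1)))).
Proof.
  intros Hb Hc Hn Hj Hk.
  set (m := (j + k)%nat).
  replace (n - i1 - 1)%nat with (m - 1)%nat by lia.
  replace n with (m + i1)%nat by lia.
  rewrite fact_ratio_pred by lia.
  rewrite !Rabs_mult, lag_factor_complement, !Rabs_lag_factor_small by (lia || lra).
  set (F := INR (fact (m + i1)) / (INR (fact i1) * INR (fact m))).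
  assert (HF : 0 < F)
    by (apply Rdiv_lt_0_compat; [| apply Rmult_lt_0_compat]; apply INR_fact_pos).
  assert (HM : 1 <= INR m) by (apply (le_INR 1); lia).
  destruct (decay_prod_bounds (b + c) (S m) i1 ltac:(lia) ltac:(rewrite S_INR; lra)) as [P0 _].
  rewrite (Rabs_pos_eq (F * _)) by (apply Rmult_le_pos; lra).
  pose proof (central_factor_le m i1 k b c Hb Hc Hk ltac:(lia)) as Hcentral.
  pose proof (edge_factor_le_nu b j Hb Hj) as Hedge.
  destruct (decay_prod_bounds b 1 (j - 1) ltac:(lia) ltac:(cbn; lra)) as [P2 _].
  destruct (decay_prod_bounds c 1 (k - 1) ltac:(lia) ltac:(cbn; lra)) as [P3 _].
  assert (HJ : 0 < INR j) by (apply lt_0_INR; lia).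
  assert (HK : 2 <= INR k) by (apply (le_INR 2); lia).
  assert (0 < Rpower (INR j) (1 + b)) by apply exp_pos.
  replace (F * decay_prod (b + c) (S m) i1 * (b / INR j * decay_prod b 1 (j - 1))
             * (c / INR k * decay_prod c 1 (k - 1)))
    with (INR m * F * ((/ INR m * decay_prod (b + c) (S m) i1
                          * (c / INR k * decay_prod c 1 (k - 1)))
                        * (b / INR j * decay_prod b 1 (j - 1)))) by (field; lra).
  replace ((1 - c) / (exp 1 * (ln (INR (m + i1)) - ln 2)) * (INR m * F)
             * (nu b j / (Rpower (INR j) (1 + b) * (INR k * (INR k - 1)))))
    with (INR m * F * ((1 - c) / (exp 1 * (ln (INR (m + i1)) - ln 2)) / (INR k * (INR k - 1))
                        * (nu b j / Rpower (INR j) (1 + b))))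
    by (unfold Rdiv; rewrite (Rinv_mult (Rpower _ _)); ring).
  assert (0 < / INR m) by (apply Rinv_0_lt_compat; lra).
  assert (0 < b / INR j) by (apply Rdiv_lt_0_compat; lra).
  assert (0 < c / INR k) by (apply Rdiv_lt_0_compat; lra).
  apply Rmult_le_compat_l; [nra |].
  apply Rmult_le_compat; [| | exact Hcentral | exact Hedge].
  - apply Rmult_le_pos; apply Rmult_le_pos; lra.
  - apply Rmult_le_pos; lra.
Qed.

Theorem lemma20 (n i1 i2 i3 : nat) (a2 a3 : R) :
  (4 <= n)%nat ->
  0 < a2 < 1 -> 0 < a3 < 1 ->
  (i1 + i2 + i3 = n)%nat ->
  (1 <= i2)%nat -> (1 <= i3)%nat -> (3 <= i2 + i3)%nat ->
  let a1 := 1 - a2 - a3 in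
  let L := lagr n i1 i2 i3 ((INR n - 1 + a1) / INR n) (a2 / INR n) (a3 / INR n) in
  let G := INR (fact n) / (INR (fact i1) * INR (fact (n - i1 - 1))) in
  ((1 <= i2)%nat -> (2 <= i3)%nat ->
     Rabs L <= (1 - a3) / (exp 1 * (ln (INR n) - ln 2)) * G *
               (nu a2 i2 / (Rpower (INR i2) (1 + a2) * (INR i3 * (INR i3 - 1)))))
  /\
  ((2 <= i2)%nat -> (1 <= i3)%nat ->
     Rabs L <= (1 - a2) / (exp 1 * (ln (INR n) - ln 2)) * G *
               (nu a3 i3 / (Rpower (INR i3) (1 + a3) * (INR i2 * (INR i2 - 1))))).
Proof.
  intros _ Ha2 Ha3 Hsum _ _ _ a1 L G. unfold L, G, a1, lagr. split.
  - intros Hi2 Hi3.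
    replace (INR n - 1 + (1 - a2 - a3)) with (INR n - (a2 + a3)) by ring.
    now apply Rabs_lagr_corner_le.
  - intros Hi2 Hi3.
    replace (INR n - 1 + (1 - a2 - a3)) with (INR n - (a3 + a2)) by ring.
    rewrite Rmult_assoc, (Rmult_comm (lag_factor _ _ i2)), <- Rmult_assoc.
    apply Rabs_lagr_corner_le; lia || assumption.
Qed.
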